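(* For any time warp $f$, $n\in\omega\setminus\{0\}$, and $m\in\omega$: $f^{r}(n)=m\iff f(m)\le n<f(m+1)$; $f^{r}(n)=\omega\iff f(\omega)\le n$; $f^{r}(\omega)=m\iff f(m+1)=\omega$ and $f^{r}(k)=m$ for some $k\in\omega$; $f^{r}(\omega)=\omega\iff f(\omega)<\omega$ or ($f(\omega)=\omega$ and $f(k)<\omega$ for all $k\in\omega$).
   Context: Let $\overline{\omega}=\omega\cup\{\omega\}$ be the natural numbers with a top element $\omega$ adjoined, with its natural total order. A time warp is a monotone map $f\colon\overline{\omega}\to\overline{\omega}$ with $f(0)=0$ and $f(\omega)=\bigvee\{f(n)\mid n\in\omega\}$. The set $W$ of time warps is ordered pointwise and $fg:=f\circ g$; $\mathrm{id}$ is the identity. The left residual $\backslash$ is the binary operation on $W$ with $g\le f\backslash h\iff fg\le h$ for all $f,g,h\in W$. Define $f^{r}:=f\backslash\mathrm{id}$. *)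

(* omega-bar = nat with a top element adjoined, encoded as
   [option nat]: [Some n] is the natural number n, [None] is omega. *)
From Stdlib Require Import Arith Lia.

Definition obar := option nat.
Notation omega := (@None nat).

Definition leo (x y : obar) : Prop :=
  match x, y with
  | _, None => True
  | None, Some _ => False
  | Some a, Some b => a <= b
  end.

Definition lto (x y : obar) : Prop := leo x y /\ x <> y.

Definition is_join (F : nat -> obar) (s : obar) : Prop :=
  (forall n, leo (F n) s) /\ (forall u, (forall n, leo (F n) u) -> leo s u).

Record timewarp := TimeWarp {
  tw :> obar -> obar;
  tw_mono : forall x y, leo x y -> leo (tw x) (tw y);
  tw_zero : tw (Some 0) = Some 0;
  tw_omega : is_join (fun n => tw (Some n)) (tw omega)
}.

Definition leW (f g : obar -> obar) : Prop := forall x, leo (f x) (g x).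

Lemma id_mono : forall x y : obar, leo x y -> leo x y.
Proof. auto. Qed.

Lemma id_omega : is_join (fun n => Some n) omega.
Proof.
  split.
  - intros n; exact I.
  - intros [k|] H; [|exact I].
    specialize (H (S k)); simpl in H; lia.
Qed.

Definition idW : timewarp := TimeWarp (fun x => x) id_mono eq_refl id_omega.

Definition is_left_residual (res : timewarp -> timewarp -> timewarp) : Prop :=
  forall f g h : timewarp, leW g (res f h) <-> leW (fun x => f (g x)) h.

(* Testing the residual property against the warp that is 0 below n and x from
   n on shows that, for n > 0, f^r(n) is the largest x with f(x) <= n.  Since
   f^r(omega) is the join of the f^r(k), a natural number j lies below
   f^r(omega) exactly when f(j) is finite. *)
From Stdlib Require Import Arith Lia Classical.

Lemma leo_refl x : leo x x.
Proof. destruct x; simpl; auto. Qed.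

Lemma leo_trans x y z : leo x y -> leo y z -> leo x z.
Proof. destruct x, y, z; simpl; auto; try lia; tauto. Qed.

Lemma leo0 x : leo (Some 0) x.
Proof. destruct x; simpl; auto; lia. Qed.

Lemma leo_omegaE x : leo omega x <-> x = omega.
Proof. destruct x; simpl; split; intros H; solve [auto | contradiction | discriminate]. Qed.

Lemma lto_iff_not_leo x y : lto x y <-> ~ leo y x.
Proof.
  unfold lto; destruct x, y; simpl; split; intros H; try tauto.
  - intros Hle; apply (proj2 H); f_equal; lia.
  - split; [lia | intros E; injection E as E; lia].
  - split; [exact I | discriminate].
Qed.

Lemma lto_omega_iff x : lto x omega <-> x <> omega.
Proof. rewrite lto_iff_not_leo, leo_omegaE; split; auto. Qed.

Lemma eq_Some_iff x m : x = Some m <-> leo (Some m) x /\ ~ leo (Some (S m)) x.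
Proof.
  destruct x as [a|]; simpl; split.
  - intros E; injection E as E; lia.
  - intros [H1 H2]; f_equal; lia.
  - discriminate.
  - tauto.
Qed.

Lemma eq_omega_iff x : x = omega <-> forall j, leo (Some j) x.
Proof.
  destruct x as [a|]; simpl; split; auto; [discriminate |].
  intros H; specialize (H (S a)); lia.
Qed.

Lemma is_join_geP F s j :
  is_join F s -> leo (Some j) s <-> exists k, leo (Some j) (F k).
Proof.
  intros [Fub Fleast]; split.
  - destruct j as [|j]; intros Hs; [exists 0; apply leo0 |].
    apply NNPP; intros Hnone.
    assert (Fbound : forall k, leo (F k) (Some j)).
    { intros k; destruct (F k) as [a|] eqn:Ek; simpl.
      - destruct (le_lt_dec a j) as [|Hlt]; [assumption |].
        exfalso; apply Hnone; exists k; rewrite Ek; simpl; lia.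
      - apply Hnone; exists k; rewrite Ek; exact I. }
    assert (Hsj := leo_trans _ _ _ Hs (Fleast _ Fbound)); simpl in Hsj; lia.
  - intros [k Hk]; exact (leo_trans _ _ _ Hk (Fub k)).
Qed.

Definition step_fun (n : nat) (x : obar) (y : obar) : obar :=
  match y with Some k => if k <? n then Some 0 else x | None => x end.

Lemma step_fun_mono n x y z : leo y z -> leo (step_fun n x y) (step_fun n x z).
Proof.
  destruct y as [a|], z as [b|]; simpl; intros H; try tauto.
  - destruct (Nat.ltb_spec a n), (Nat.ltb_spec b n);
      solve [apply leo_refl | apply leo0 | lia].
  - destruct (a <? n); [apply leo0 | apply leo_refl].
  - apply leo_refl.
Qed.

Lemma step_fun_zero n x : 0 < n -> step_fun n x (Some 0) = Some 0.
Proof. intros Hn; simpl; destruct (Nat.ltb_spec 0 n); [reflexivity | lia]. Qed.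

Lemma step_fun_omega n x :
  is_join (fun k => step_fun n x (Some k)) (step_fun n x omega).
Proof.
  split.
  - intros k; simpl; destruct (k <? n); [apply leo0 | apply leo_refl].
  - intros u H; specialize (H n); simpl in H.
    destruct (Nat.ltb_spec n n); [lia | exact H].
Qed.

Definition step_warp (n : nat) (x : obar) (Hn : 0 < n) : timewarp :=
  TimeWarp (step_fun n x) (step_fun_mono n x) (step_fun_zero n x Hn)
    (step_fun_omega n x).

Lemma timewarp_finite_iff (f : timewarp) :
  (forall j, f (Some j) <> omega) <->
  lto (f omega) omega \/ (f omega = omega /\ forall k, lto (f (Some k)) omega).
Proof.
  setoid_rewrite lto_omega_iff; split.
  - intros Hfin; destruct (f omega); [left; discriminate | right; auto].
  - intros [Hom | [_ Hfin]] j; [| exact (Hfin j)].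
    intros Hj; apply Hom, leo_omegaE.
    assert (Hmono : leo (f (Some j)) (f omega)) by (apply tw_mono; exact I).
    rewrite Hj in Hmono; exact Hmono.
Qed.

Section RightResidual.

Variable res : timewarp -> timewarp -> timewarp.
Hypothesis Hres : is_left_residual res.
Variable f : timewarp.

Let fr := res f idW.

Lemma residual_counit x : leo (f (fr x)) x.
Proof. exact (proj1 (Hres f fr idW) (fun y => leo_refl _) x). Qed.

Lemma residual_geP n x : 0 < n -> leo x (fr (Some n)) <-> leo (f x) (Some n).
Proof.
  intros Hn; split; intros Hx.
  - exact (leo_trans _ _ _ (tw_mono f _ _ Hx) (residual_counit _)).
  - assert (Hstep : leW (step_warp n x Hn) fr).
    { apply Hres; intros [k|]; simpl; [| destruct (f x); exact I].
      destruct (Nat.ltb_spec k n).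
      - rewrite tw_zero; simpl; lia.
      - apply (leo_trans _ _ _ Hx); simpl; lia. }
    specialize (Hstep (Some n)); simpl in Hstep.
    destruct (Nat.ltb_spec n n); [lia | exact Hstep].
Qed.

Lemma residual_omega_geP j : leo (Some j) (fr omega) <-> f (Some j) <> omega.
Proof.
  rewrite (is_join_geP _ _ _ (tw_omega fr)); split.
  - intros [k Hk] Hj.
    assert (Hle : leo (Some j) (fr (Some (S k)))).
    { apply (leo_trans _ _ _ Hk), tw_mono; simpl; lia. }
    apply residual_geP in Hle; [| lia].
    rewrite Hj in Hle; exact Hle.
  - destruct (f (Some j)) as [a|] eqn:Ej; [intros _ | tauto].
    exists (S a); apply residual_geP; [lia |]; rewrite Ej; simpl; lia.
Qed.

Lemma residual_eq_Some n m :
  0 < n ->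
  fr (Some n) = Some m <->
  leo (f (Some m)) (Some n) /\ lto (Some n) (f (Some (S m))).
Proof.
  intros Hn; rewrite eq_Some_iff, !residual_geP, lto_iff_not_leo by exact Hn.
  tauto.
Qed.

Lemma residual_eq_omega n :
  0 < n -> fr (Some n) = omega <-> leo (f omega) (Some n).
Proof. intros Hn; rewrite <- leo_omegaE; exact (residual_geP n omega Hn). Qed.

Lemma residual_omega_eq_Some m :
  fr omega = Some m <->
  f (Some (S m)) = omega /\ exists k, fr (Some k) = Some m.
Proof.
  rewrite eq_Some_iff, !residual_omega_geP; split.
  - intros [Hm HSm]; apply NNPP in HSm; split; [exact HSm |].
    destruct (f (Some m)) as [a|] eqn:Ea; [| tauto].
    exists (S a); apply residual_eq_Some; [lia |].
    rewrite Ea, HSm, lto_omega_iff; split; [simpl; lia | discriminate].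
  - intros [HSm [k Hk]]; split; [| tauto].
    apply residual_omega_geP; rewrite <- Hk; exact (proj1 (tw_omega fr) k).
Qed.

Lemma residual_omega_eq_omega :
  fr omega = omega <-> forall j, f (Some j) <> omega.
Proof.
  rewrite eq_omega_iff; split; intros H j; apply residual_omega_geP, H.
Qed.

End RightResidual.

Theorem lemma2p6 (res : timewarp -> timewarp -> timewarp)
  (Hres : is_left_residual res) (f : timewarp) (n m : nat) (hn : 0 < n) :
  let fr := res f idW in
  (fr (Some n) = Some m <->
     leo (f (Some m)) (Some n) /\ lto (Some n) (f (Some (S m)))) /\
  (fr (Some n) = omega <-> leo (f omega) (Some n)) /\
  (fr omega = Some m <->
     f (Some (S m)) = omega /\ exists k : nat, fr (Some k) = Some m) /\
  (fr omega = omega <->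
     lto (f omega) omega \/
     (f omega = omega /\ forall k : nat, lto (f (Some k)) omega)).
Proof.
  intros fr; split; [| split; [| split]].
  - exact (residual_eq_Some res Hres f n m hn).
  - exact (residual_eq_omega res Hres f n hn).
  - exact (residual_omega_eq_Some res Hres f m).
  - rewrite <- timewarp_finite_iff; exact (residual_omega_eq_omega res Hres f).
Qed.
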